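(* Let $H_1,\dots,H_n$ be null hypotheses indexed by $\mathcal V=\{1,\dots,n\}$ with $p$-values $p_1,\dots,p_n$ that are marginally uniform on $[0,1]$ under the null; let $\bar{\mathcal S}=\{v:H_v\text{ true}\}$. Let $\mathcal G$ be a directed acyclic graph on $\mathcal V$ such that if $H_v$ is false then $H_w$ is false for every ancestor $w$ of $v$, and let $\mathcal C_v$ be $v$ together with its descendants. Let $Z_v=\Phi^{-1}(p_v)$, where $\Phi$ is the standard normal CDF, and assume $Z_{\bar{\mathcal S}}\sim\mathcal N(0,R)$ for some correlation matrix $R$. For weights $\pi_{vw}\ge0$ with $\sum_{w\in\mathcal C_v}\pi_{vw}=1$, define \[\tilde p_v=\begin{cases}1 & \text{if }\sum_{w\in\mathcal C_v}\pi_{vw}Z_w\ge0,\\ \Phi\big(\sum_{w\in\mathcal C_v}\pi_{vw}Z_w\big)&\text{otherwise.}\end{cases}\] Then $\Pr(\tilde p_v\le\alpha)\le\alpha$ for all $\alpha\in[0,1]$ and all $v\in\bar{\mathcal S}$. *)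

From HB Require Import structures.
From mathcomp Require Import all_boot all_order all_algebra.
From mathcomp Require Import all_classical all_reals all_analysis.
Set Implicit Arguments. Unset Strict Implicit. Unset Printing Implicit Defensive.
Import Order.TTheory GRing.Theory Num.Theory.
Local Open Scope classical_set_scope.
Local Open Scope ring_scope.

Section Defs.
Context {R : realType}.

Definition Phi (x : R) : R := fine (normal_prob 0 1 `]-oo, x]).

(* quantile function Phi^{-1}(y) = inf {x | y <= Phi x}; this is the inverse
   of Phi on (0,1); at y = 0 or 1 it takes the (irrelevant, probability-zero)
   conventional value given by inf on unbounded/empty sets. *)
Definition Phiinv (y : R) : R := inf [set x : R | y <= Phi x].

Definition is_centered_normal {d} {T : measurableType d}
  (P : probability T R) (Y : T -> R) (s2 : R) : Prop :=
  0 <= s2 /\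
  forall A : set R, measurable A ->
    P (Y @^-1` A) =
    (if s2 == 0 then \d_(0:R) A else normal_prob 0 (Num.sqrt s2) A).

End Defs.

Definition desc_closure {n} (e : rel 'I_n) (v : 'I_n) : {set 'I_n} :=
  [set w | connect e v w].

Definition is_dag {n} (e : rel 'I_n) : Prop :=
  (forall v, ~~ e v v) /\
  (forall v w, connect e v w -> connect e w v -> v = w).

From HB Require Import structures.
From mathcomp Require Import all_boot all_order all_algebra.
From mathcomp Require Import all_classical all_reals all_analysis.
From mathcomp Require Import measurable_realfun.
From mathcomp Require Import ring lra.
Import Order.TTheory GRing.Theory Num.Theory.
Local Open Scope classical_set_scope.
Local Open Scope ring_scope.

(* Since H_v is true, so is every H_w with w in C_v; hence
   X = sum_w pi_vw Z_w is a centered Gaussian combination of null z-scores,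
   with variance sum_ij pi_vi pi_vj R_ij <= (sum_i pi_vi)^2 = 1 because
   correlations are at most 1.  For alpha < 1 the event {p~_v <= alpha} is
   {X in A} with A = {x < 0 | Phi x <= alpha}, a down-closed set of negative
   reals.  Writing X = s Y with Y standard normal and 0 < s <= 1, we have
   {X in A} = {Y in A/s} and A/s is contained in A; finally
   N(0,1)(A) <= alpha since A is a half-line on which Phi <= alpha. *)

Section StandardNormalCDF.
Context {R : realType}.

Lemma PhiE (x : R) : normal_prob 0 1 `]-oo, x] = (Phi x)%:E.
Proof.
rewrite /Phi fineK // ge0_fin_numE ?measure_ge0 //.
by apply: le_lt_trans (probability_le1 _ _) _; rewrite ?ltry.
Qed.

Lemma Phi_le1 (x : R) : Phi x <= 1.
Proof. by rewrite -lee_fin -PhiE probability_le1. Qed.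

Lemma Phi_nondecreasing : {homo (@Phi R) : x y / x <= y}.
Proof.
move=> x y xy; rewrite -lee_fin -!PhiE; apply: le_measure; rewrite ?inE //.
by move=> z; rewrite /= !in_itv /= => zx; apply: le_trans zx xy.
Qed.

Lemma truncated_Phi_leE (alpha x : R) : alpha < 1 ->
  ((if 0 <= x then 1 else Phi x) <= alpha) = (x < 0) && (Phi x <= alpha).
Proof. by move=> alpha_lt1; case: leP => //= _; rewrite leNgt alpha_lt1. Qed.

End StandardNormalCDF.

Definition down_closed {R : realType} (A : set R) : Prop :=
  forall x y, A x -> y <= x -> A y.

Section DownClosedSets.
Context {R : realType}.
Implicit Types (A : set R) (alpha s : R).

Lemma down_closed_measurable A : down_closed A -> measurable A.
Proof.
move=> dA; apply: is_interval_measurable => x y Ax Ay z /andP[_ zy].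
exact: dA Ay zy.
Qed.

Lemma down_closed_scale A s : down_closed A -> 0 < s ->
  down_closed [set y | A (s * y)].
Proof. by move=> dA s_gt0 x y Asx yx; apply: dA Asx _; rewrite ler_pM2l. Qed.

Lemma down_closed_neg_scale_sub A s : down_closed A ->
  (forall x, A x -> x < 0) -> 0 < s <= 1 -> [set y | A (s * y)] `<=` A.
Proof.
move=> dA A_neg /andP[s_gt0 s_le1] y Asy.
have y_lt0 : y < 0 by rewrite -(pmulr_rlt0 _ s_gt0); apply: A_neg.
by apply: dA Asy _; nra.
Qed.

Lemma down_closed_bigcup {A} : down_closed A -> has_sup A -> ~ A (sup A) ->
  A = \bigcup_k [set` `]-oo, sup A - k.+1%:R^-1]].
Proof.
move=> dA supA nAsup; apply/seteqP; split=> x.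
- move=> Ax; have x_lt : x < sup A.
    rewrite lt_neqAle sup_upper_bound // andbT.
    by apply: contra_notN nAsup => /eqP <-.
  have [k hk] := ltr_add_invr x_lt.
  by exists k => //; rewrite /= in_itv /= lerBrDr ltW.
- case=> k _; rewrite /= in_itv /= => x_le.
  have k_gt0 : 0 < k.+1%:R^-1 :> R by rewrite invr_gt0 ltr0Sn.
  have [a Aa a_gt] := sup_adherent k_gt0 supA.
  exact: dA Aa (le_trans x_le (ltW a_gt)).
Qed.

Lemma normal_prob_down_closed_le alpha A : 0 <= alpha ->
  down_closed A -> has_ubound A -> (forall x, A x -> Phi x <= alpha) ->
  (normal_prob 0 1 A <= alpha%:E)%E.
Proof.
move=> alpha_ge0 dA ubA PhiA.
have [->|/set0P A0] := eqVneq A set0; first by rewrite measure0 lee_fin.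
have supA : has_sup A by [].
have [Asup|nAsup] := pselect (A (sup A)).
  apply: (@le_trans _ _ (normal_prob 0 1 `]-oo, sup A])).
    apply: le_measure; rewrite ?inE; first exact: down_closed_measurable.
      exact: measurable_itv.
    by move=> x Ax; rewrite /= in_itv /= sup_upper_bound.
  by rewrite PhiE lee_fin PhiA.
rewrite (down_closed_bigcup dA supA nAsup).
set F := fun k : nat => [set` `]-oo, sup A - k.+1%:R^-1]].
have mF k : measurable (F k) by apply: measurable_itv.
have F_nd : {homo F : i j / (i <= j)%N >-> (i <= j)%O}.
  move=> i j ij; apply/subsetPset => x; rewrite /F /= !in_itv /= => x_le.
  by apply: le_trans x_le _; rewrite lerB // lef_pV2 ?posrE // ler_nat ltnS.
have := nondecreasing_cvg_mu (mu := normal_prob 0 1) mF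
  (bigcupT_measurable _ mF) F_nd.
move/lee_cvg_to; apply; first exact: cvg_cst.
apply: nearW => k /=; rewrite PhiE lee_fin PhiA //.
rewrite {1}(down_closed_bigcup dA supA nAsup).
by exists k => //=; rewrite in_itv /=.
Qed.

End DownClosedSets.

Definition qform {R : ringType} {n} (S : {set 'I_n}) (Rm : 'M[R]_n)
    (c : 'I_n -> R) : R :=
  \sum_(i in S) \sum_(j in S) c i * c j * Rm i j.

Lemma qformZ {R : comRingType} {n} (S : {set 'I_n}) (Rm : 'M[R]_n) a c :
  qform S Rm (fun i => a * c i) = a ^+ 2 * qform S Rm c.
Proof.
rewrite /qform mulr_sumr; apply: eq_bigr => i _.
by rewrite mulr_sumr; apply: eq_bigr => j _; ring.
Qed.

Lemma big_mkcond_subset {I : finType} {V : nmodType} {S C : {set I}}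
    {f : I -> V} : {subset C <= S} ->
  \sum_(i in S) (if i \in C then f i else 0) = \sum_(i in C) f i.
Proof.
move=> CS; rewrite -big_mkcondr; apply: eq_bigl => i.
by apply/andP/idP => [[]//|iC]; split => //; apply: CS.
Qed.

Lemma sum_delta_mull {R : ringType} {I : finType} (S : {set I}) i
    (G : I -> R) : i \in S ->
  \sum_(k in S) (k == i)%:R * G k = G i.
Proof.
move=> iS; rewrite (bigD1 i) //= eqxx mul1r big1 ?addr0 //.
by move=> k /andP[_ /negbTE ->]; rewrite mul0r.
Qed.

Lemma desc_closure_subset {n} {e : rel 'I_n} {S : {set 'I_n}} {v : 'I_n} :
  (forall u w, u \notin S -> connect e w u -> w \notin S) -> v \in S ->
  {subset desc_closure e v <= S}.
Proof.
move=> S_anc v_in w; rewrite inE => vw.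
by apply: contraLR v_in => /S_anc; apply.
Qed.

Section CorrelationMatrix.
Context {R : realFieldType} {n : nat}.
Context {S : {set 'I_n}} {Rm : 'M[R]_n}.
Hypothesis Rm_sym : forall i j, i \in S -> j \in S -> Rm i j = Rm j i.
Hypothesis Rm_diag : forall i, i \in S -> Rm i i = 1.
Hypothesis Rm_psd : forall c, 0 <= qform S Rm c.

(* The quadratic form at e_i - e_j is 2 - 2 Rm i j. *)
Lemma corr_entry_le1 i j : i \in S -> j \in S -> Rm i j <= 1.
Proof.
move=> iS jS; have [<-|ij] := eqVneq i j; first by rewrite Rm_diag.
pose d k : R := (k == i)%:R - (k == j)%:R.
have inner k : \sum_(l in S) d k * d l * Rm k l = d k * (Rm k i - Rm k j).
  under eq_bigr do rewrite -mulrA.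
  rewrite -mulr_sumr; congr (_ * _).
  by under eq_bigr do rewrite /d mulrBl; rewrite sumrB !sum_delta_mull.
have := Rm_psd d; rewrite /qform.
under eq_bigr do rewrite inner /d mulrBl.
rewrite sumrB !sum_delta_mull // !Rm_diag // (Rm_sym j i) //.
lra.
Qed.

Lemma qform_convex_le1 c : (forall i, 0 <= c i) -> \sum_(i in S) c i = 1 ->
  qform S Rm c <= 1.
Proof.
move=> c_ge0 c_sum1; rewrite -(mulr1 1) -{1}c_sum1 -{1}c_sum1 big_distrlr /=.
apply: ler_sum => i iS; apply: ler_sum => j jS.
by rewrite ler_piMr ?mulr_ge0 ?corr_entry_le1.
Qed.

End CorrelationMatrix.

Section GaussianCombination.
Context {R : realType} {d : measure_display} {T : measurableType d}.
Context {P : probability T R} {n : nat} {S : {set 'I_n}} {Rm : 'M[R]_n}.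
Context {Z : 'I_n -> T -> R}.
Hypothesis Z_gauss : forall c,
  is_centered_normal P (fun t => \sum_(i in S) c i * Z i t) (qform S Rm c).

Lemma gauss_comb_down_closed_le (c : 'I_n -> R) (A : set R) :
  qform S Rm c <= 1 -> down_closed A -> (forall x, A x -> x < 0) ->
  (P ((fun t => \sum_(i in S) c i * Z i t)%R @^-1` A) <= normal_prob 0 1 A)%E.
Proof.
move=> qc_le1 dA A_neg; have [qc_ge0 Xc] := Z_gauss c.
have [qc0|qc_neq0] := eqVneq (qform S Rm c) 0.
  rewrite Xc; last exact: down_closed_measurable.
  rewrite qc0 eqxx diracE.
  by case: (boolP (0 \in A)) => [/set_mem/A_neg|_]; rewrite ?ltxx ?measure_ge0.
set s := Num.sqrt (qform S Rm c).
have s_gt0 : 0 < s by rewrite sqrtr_gt0 lt_neqAle eq_sym qc_neq0.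
have s_le1 : s <= 1 by rewrite -sqrtr1 ler_sqrt.
have [_ Yc] := Z_gauss (fun i => s^-1 * c i).
have -> : (fun t => \sum_(i in S) c i * Z i t) @^-1` A =
    (fun t => \sum_(i in S) s^-1 * c i * Z i t) @^-1` [set y | A (s * y)].
  apply/funext => t; rewrite /= mulr_sumr; congr A; apply: eq_bigr => i _.
  by rewrite !mulrA mulfV ?mul1r // gt_eqF.
have mB : measurable [set y | A (s * y)].
  by apply: down_closed_measurable; apply: down_closed_scale.
rewrite Yc // qformZ exprVn sqr_sqrtr // mulVf // oner_eq0 sqrtr1.
apply: le_measure; rewrite ?inE //; first exact: down_closed_measurable.
by apply: down_closed_neg_scale_sub => //; rewrite s_gt0.
Qed.

Lemma gauss_comb_truncated_Phi_le (c : 'I_n -> R) (X : T -> R) (alpha : R) :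
  qform S Rm c <= 1 -> (forall t, X t = \sum_(i in S) c i * Z i t) ->
  0 <= alpha <= 1 ->
  (P [set t | ((let s := X t in if 0 <= s then 1 else Phi s) <= alpha)%R] <=
   alpha%:E)%E.
Proof.
move=> qc_le1 X_E /andP[alpha_ge0 alpha_le1].
have [->|alpha_neq1] := eqVneq alpha 1.
  rewrite [E in P E](_ : _ = setT) ?probability_setT //.
  by apply/seteqP; split => // t _ /=; case: ifP; rewrite ?Phi_le1.
have alpha_lt1 : alpha < 1 by rewrite lt_neqAle alpha_neq1.
pose A := [set x : R | (x < 0) && (Phi x <= alpha)].
have dA : down_closed A.
  move=> x y /andP[x_lt0 Phix] yx; apply/andP; split.
    exact: le_lt_trans yx x_lt0.
  exact: le_trans (Phi_nondecreasing _ _ yx) Phix.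
rewrite [E in P E](_ : _ = (fun t => \sum_(i in S) c i * Z i t) @^-1` A).
  apply: le_trans (gauss_comb_down_closed_le c A qc_le1 dA _) _.
    by move=> x /andP[].
  apply: normal_prob_down_closed_le dA _ _ => //.
  - by exists 0 => x /andP[/ltW].
  - by move=> x /andP[].
by apply/funext => t /=; rewrite -X_E truncated_Phi_leE.
Qed.

End GaussianCombination.

Theorem lemma2 (R : realType) (d : measure_display) (T : measurableType d)
  (P : probability T R) (n : nat)
  (p : 'I_n -> T -> R)                 (* p-values *)
  (Sbar : {set 'I_n})                  (* true null hypotheses *)
  (e : rel 'I_n)                       (* edges of the DAG G *)
  (Rm : 'M[R]_n)                       (* correlation matrix (block on Sbar) *)
  (pi : 'I_n -> 'I_n -> R)             (* weights pi_{vw} *)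
  (hp_meas : forall v, measurable_fun setT (p v))
  (hp01 : forall v t, 0 <= p v t <= 1)
  (hunif : forall v, v \in Sbar -> forall a : R, 0 <= a <= 1 ->
     P [set t | p v t <= a] = a%:E)
  (hdag : is_dag e)
  (hlog : forall v w, v \notin Sbar -> connect e w v -> w \notin Sbar)
  (hRsym : forall i j, i \in Sbar -> j \in Sbar -> Rm i j = Rm j i)
  (hRdiag : forall i, i \in Sbar -> Rm i i = 1)
  (hRpsd : forall c : 'I_n -> R,
     0 <= \sum_(i in Sbar) \sum_(j in Sbar) c i * c j * Rm i j)
  (hgauss : forall c : 'I_n -> R,
     is_centered_normal P
       (fun t => \sum_(i in Sbar) c i * Phiinv (p i t))
       (\sum_(i in Sbar) \sum_(j in Sbar) c i * c j * Rm i j))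
  (hpi_ge0 : forall v w, 0 <= pi v w)
  (hpi_sum : forall v, \sum_(w in desc_closure e v) pi v w = 1) :
  forall (v : 'I_n) (alpha : R), v \in Sbar -> 0 <= alpha <= 1 ->
    (P [set t | ((let s := \sum_(w in desc_closure e v) pi v w * Phiinv (p w t) in
                if 0 <= s then 1 else Phi s) <= alpha)%R] <= alpha%:E)%E.
Proof.
(* Acyclicity and the marginal properties of the p-values are not needed:
   [hgauss] already gives the joint law of the null z-scores. *)
move=> v alpha vS alpha01.
have CS := desc_closure_subset hlog vS.
pose c i := if i \in desc_closure e v then pi v i else 0.
have c_ge0 i : 0 <= c i by rewrite /c; case: ifP.
have c_sum1 : \sum_(i in Sbar) c i = 1.
  by rewrite (big_mkcond_subset CS) hpi_sum.
apply: (gauss_comb_truncated_Phi_le (Z := fun i t => Phiinv (p i t)) hgauss c)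
  => //.
- exact: (qform_convex_le1 hRsym hRdiag hRpsd).
- move=> t; rewrite -(big_mkcond_subset CS); apply: eq_bigr => i _.
  by rewrite /c; case: ifP; rewrite ?mul0r.
Qed.
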